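(* Let $\mathcal{C}\subseteq\mathbb{F}_q^n$ be an MDS code with $|\mathcal{C}|=q^k$, $k\ge1$, and minimum distance $d=n-k+1$, and let $u,v\in\mathcal{C}$ with $u\ne v$. Then there exists $u'\in\mathcal{C}$ such that $d(u,u')=d$ and $d(u',v)\le d(u,v)-1$.
   Context: $d(\cdot,\cdot)$ is Hamming distance. An $(n,M,d)_q$ code is MDS if $M=q^{n-d+1}$ (it meets the Singleton bound). *)

From mathcomp Require Import all_boot all_algebra.
Set Implicit Arguments. Unset Strict Implicit. Unset Printing Implicit Defensive.

Definition hamming (F : finType) (n : nat) (u v : {ffun 'I_n -> F}) : nat :=
  #|[set i : 'I_n | u i != v i]|.

Definition min_dist (F : finType) (n : nat) (C : {set {ffun 'I_n -> F}}) (d : nat) : Prop :=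
  (forall u v, u \in C -> v \in C -> u != v -> d <= hamming u v) /\
  (exists u v, [/\ u \in C, v \in C, u != v & hamming u v = d]).

From mathcomp Require Import all_boot all_algebra.
From mathcomp Require Import zify.
Set Implicit Arguments. Unset Strict Implicit. Unset Printing Implicit Defensive.

(* Any k coordinates of an MDS code of size q^k form an information set: two
   codewords agreeing on them differ in at most n - k < d places, so restriction
   to them is injective on C, hence onto all q^k patterns.  Let D be the set
   where u and v differ and j in D.  Since |D| >= n - k + 1, the set
   {j} U (complement of D) has at most k elements; enlarge it to a set T of
   exactly k coordinates and take the codeword u' equal to v at j and to u on
   T \ {j}.  Then u' agrees with v outside D \ {j}, and u' differs from u in at
   most n - k + 1 places, but in at least d places since u' j <> u j. *)

Lemma exists_subset_between (T : finType) (A B : {set T}) m :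
  A \subset B -> #|A| <= m <= #|B| ->
  exists S : {set T}, [/\ A \subset S, S \subset B & #|S| = m].
Proof.
move=> sAB; elim: m => [|m IHm] /andP[leAm lemB].
  by exists A; split => //; apply/eqP; rewrite -leqn0.
have [eqAm | neAm] := eqVneq #|A| m.+1; first by exists A.
have [S [sAS sSB cardS]] : exists S : {set T}, [/\ A \subset S, S \subset B & #|S| = m].
  by apply: IHm; apply/andP; split; lia.
have /subsetPn[x xB xS] : ~~ (B \subset S).
  by apply: contraTN lemB => /subset_leq_card; lia.
exists (x |: S); split.
- exact: subset_trans sAS (subsetUr _ _).
- by rewrite subUset sub1set xB.
- by rewrite cardsU1 xS cardS.
Qed.

Section Hamming.

Variables (F : finType) (n : nat).
Implicit Types (u w : {ffun 'I_n -> F}) (X : {set 'I_n}).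

Lemma hamming_le_card u w X : {in ~: X, u =1 w} -> hamming u w <= #|X|.
Proof.
move=> eq_uw; apply/subset_leq_card/subsetP => i; rewrite inE.
by apply: contraR => iX; rewrite eq_uw ?inE.
Qed.

Lemma hamming_card_compl u w X : {in X, u =1 w} -> hamming u w <= n - #|X|.
Proof.
move=> eq_uw; have := cardsC X; rewrite card_ord.
have: hamming u w <= #|~: X| by apply: hamming_le_card => i; rewrite setCK; apply: eq_uw.
lia.
Qed.

End Hamming.

Section InformationSet.

Variables (F : finType) (n k : nat) (C : {set {ffun 'I_n -> F}}).
Hypothesis card_C : #|C| = #|F| ^ k.
Hypothesis dist_C :
  forall u v, u \in C -> v \in C -> u != v -> n - k + 1 <= hamming u v.

Lemma mds_dim_le : 1 < #|F| -> k <= n.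
Proof.
move=> gt1F; rewrite -(leq_exp2l _ _ gt1F) -card_C.
by have := max_card C; rewrite card_ffun card_ord.
Qed.

Variable T : {set 'I_n}.
Hypothesis card_T : #|T| = k.

Definition restrict (w : {ffun 'I_n -> F}) : {ffun 'I_#|T| -> F} :=
  [ffun i => w (enum_val i)].

Lemma restrict_inj : {in C &, injective restrict}.
Proof.
move=> u w uC wC eq_uw; apply/eqP; apply: contraT => neq_uw.
have := dist_C uC wC neq_uw.
have: hamming u w <= n - #|T|.
  apply: hamming_card_compl => i iT.
  have := congr1 (fun f : {ffun 'I_#|T| -> F} => f (enum_rank_in iT i)) eq_uw.
  by rewrite !ffunE enum_rankK_in.
lia.
Qed.

Lemma mds_interpolation (t : {ffun 'I_n -> F}) :
  exists2 c, c \in C & {in T, c =1 t}.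
Proof.
have im_restrict : restrict @: C = [set: {ffun 'I_#|T| -> F}].
  apply/eqP; rewrite eqEcard subsetT cardsT card_in_imset; last exact: restrict_inj.
  by rewrite card_C card_ffun card_ord [#|T|]card_T leqnn.
have /imsetP[c cC eq_tc] : restrict t \in restrict @: C by rewrite im_restrict inE.
exists c => // i iT.
have := congr1 (fun f : {ffun 'I_#|T| -> F} => f (enum_rank_in iT i)) eq_tc.
by rewrite !ffunE enum_rankK_in.
Qed.

End InformationSet.

Section CloserCodeword.

Variables (F : finType) (n k : nat) (C : {set {ffun 'I_n -> F}}).
Hypothesis gt1F : 1 < #|F|.
Hypothesis card_C : #|C| = #|F| ^ k.
Hypothesis dist_C :
  forall u v, u \in C -> v \in C -> u != v -> n - k + 1 <= hamming u v.

Variables (u v : {ffun 'I_n -> F}).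
Hypotheses (uC : u \in C) (vC : v \in C) (neq_uv : u != v).

Lemma mds_closer_codeword :
  exists2 u', u' \in C & hamming u u' = n - k + 1 /\ hamming u' v < hamming u v.
Proof.
have le_kn := mds_dim_le card_C gt1F.
pose D := [set i | u i != v i].
have le_dD : n - k + 1 <= #|D| := dist_C uC vC neq_uv.
have lt_compl_k : #|~: D| < k by have := cardsC D; rewrite card_ord; lia.
have /card_gt0P[j jD] : 0 < #|D| by lia.
have [T [sjT _ card_T]] : exists T : {set 'I_n}, [/\ j |: ~: D \subset T, T \subset setT & #|T| = k].
  apply: exists_subset_between; rewrite ?subsetT // cardsT card_ord le_kn andbT.
  by rewrite cardsU1 inE jD add1n.
pose t := [ffun i => if i == j then v j else u i].
have [c cC eq_ct] := mds_interpolation card_C dist_C card_T t.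
have cj : c j = v j by rewrite eq_ct ?ffunE ?eqxx // (subsetP sjT) // setU11.
have neq_uc : u != c by apply: contraTneq jD => eq_uc; rewrite inE eq_uc cj eqxx.
exists c => //; split.
  apply/eqP; rewrite eqn_leq dist_C // andbT.
  apply: (@leq_trans #|j |: ~: T|); last by rewrite cardsU1 cardsCs setCK card_ord card_T; lia.
  apply: hamming_le_card => i; rewrite !inE negb_or negbK => /andP[nij iT].
  by rewrite eq_ct // ffunE (negbTE nij).
apply: (@leq_trans #|D :\ j|.+1); last by rewrite [hamming u v](cardsD1 j) jD.
rewrite ltnS; apply: hamming_le_card => i; rewrite !inE negb_and negbK.
case: (eqVneq i j) => [-> _ //| nij /= /negPn/eqP eq_uvi].
have iT : i \in T by rewrite (subsetP sjT) // !inE eq_uvi eqxx orbT.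
by rewrite eq_ct // ffunE (negbTE nij).
Qed.

End CloserCodeword.

Theorem lemma6 (F : finFieldType) (n k : nat) (C : {set {ffun 'I_n -> F}})
  (hk : 1 <= k) (hcard : #|C| = #|F| ^ k) (hd : min_dist C (n - k + 1))
  (u v : {ffun 'I_n -> F}) (hu : u \in C) (hv : v \in C) (huv : u != v) :
  exists2 u', u' \in C &
    hamming u u' = n - k + 1 /\ hamming u' v <= hamming u v - 1.
Proof.
have [dist_C _] := hd.
have [u' u'C [dist_uu' lt_u'v]] :=
  mds_closer_codeword (card_finNzRing_gt1 F) hcard dist_C hu hv huv.
exists u' => //; split => //.
by rewrite subn1 -ltnS (ltn_predK lt_u'v).
Qed.
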